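(* Let $G$ be a group, $k$ a commutative ring and $R=\bigoplus_{\rho\in G}R_\rho$ a $G$-graded $k$-algebra; for $t\in R$ let $t_\rho$ denote its homogeneous component of degree $\rho$. Let $\mathcal C=R\otimes_k kG$ be the $R$-coring with bimodule structure $r(s\otimes\sigma)t=\sum_{\rho\in G}rst_\rho\otimes\sigma\rho$, comultiplication $\Delta(s\otimes\sigma)=(s\otimes\sigma)\otimes_R(1\otimes\sigma)$ and counit $\varepsilon(s\otimes\sigma)=s$. Identify ${}^*\mathcal C={}_R\mathrm{Hom}(\mathcal C,R)$ with the ring $\mathrm{Map}(G,R)$ of all functions $G\to R$ with multiplication $(f\#g)(\tau)=\sum_{\rho\in G}f(\tau)_\rho\,g(\tau\rho)$, and for $\sigma\in G$ let $v_\sigma\in\mathrm{Map}(G,R)$ be given by $v_\sigma(\tau)=\delta_{\sigma,\tau}$. Then for every right $\mathrm{Map}(G,R)$-module $M$, $$\mathrm{Rat}^{\mathcal C}(M)=\bigoplus_{\sigma\in G}M\cdot v_\sigma,$$ where the sum is direct, and this is a $G$-graded right $R$-module with $(M\cdot v_\sigma)R_\rho\subseteq M\cdot v_{\sigma\rho}$ (with $R$ acting through the embedding $r\mapsto(\sigma\mapsto r)$ of $R$ into $\mathrm{Map}(G,R)$). In particular $\mathrm{Rat}^{\mathcal C}$ is exact.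
   Context: For a ring $R$ and an $R$-coring $\mathcal C$ (an $R$-bimodule with coassociative counital bimodule maps $\Delta:\mathcal C\to\mathcal C\otimes_R\mathcal C$, $\varepsilon:\mathcal C\to R$, $\Delta(c)=c_{(1)}\otimes c_{(2)}$), ${}^*\mathcal C={}_R\mathrm{Hom}(\mathcal C,R)$ is a ring with product $(f\#g)(c)=g(c_{(1)}f(c_{(2)}))$. For a right ${}^*\mathcal C$-module $M$, $\mathrm{Rat}^{\mathcal C}(M)$ is the set of $m\in M$ for which there is $\sum_i m_i\otimes c_i\in M\otimes_R\mathcal C$ with $m\cdot f=\sum_i m_if(c_i)$ for all $f\in{}^*\mathcal C$. The identification ${}^*\mathcal C\cong\mathrm{Map}(G,R)$ sends $\varphi$ to $\sigma\mapsto\varphi(1\otimes\sigma)$. *)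

From HB Require Import structures.
From mathcomp Require Import all_boot all_order all_algebra.
Set Implicit Arguments. Unset Strict Implicit. Unset Printing Implicit Defensive.
Import GRing.Theory.
Local Open Scope ring_scope.

Section Defs.
Variables (G : groupType) (k : comPzRingType) (R : algType k).

(* A G-grading R = (+)_{rho in G} R_rho of the k-algebra R, given through the
   homogeneous-component maps  comp rho t = t_rho  (so R_rho = {t | t_rho = t})
   and a duplicate-free finite list  supp t  containing every rho with t_rho <> 0. *)
Definition is_grading (comp : G -> R -> R) (supp : R -> seq G) : Prop :=
  [/\ (forall rho x y, comp rho (x + y) = comp rho x + comp rho y),
      (forall rho (a : k) x, comp rho (a *: x) = a *: comp rho x),
      (forall rho sigma t, comp rho (comp sigma t) = if rho == sigma then comp sigma t else 0),
      (forall t, [/\ uniq (supp t),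
                     (forall rho, comp rho t != 0 -> rho \in supp t) &
                     t = \sum_(rho <- supp t) comp rho t]) &
      (forall rho sigma x y, comp rho x = x -> comp sigma y = y ->
                             comp (rho * sigma)%g (x * y) = x * y)].

Definition mapmul (comp : G -> R -> R) (supp : R -> seq G) (f g : G -> R) : G -> R :=
  fun tau => \sum_(rho <- supp (f tau)) comp rho (f tau) * g (tau * rho)%g.

Definition mapadd (f g : G -> R) : G -> R := fun tau => f tau + g tau.
Definition mapone : G -> R := fun _ => 1.

Definition embR (r : R) : G -> R := fun _ => r.

Definition vdelta (sigma : G) : G -> R := fun tau => if sigma == tau then 1 else 0.

Definition is_rmodule (comp : G -> R -> R) (supp : R -> seq G)
  (M : zmodType) (act : M -> (G -> R) -> M) : Prop :=
  [/\ (forall m f g, act m (mapadd f g) = act m f + act m g),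
      (forall m n f, act (m + n) f = act m f + act n f),
      (forall m f g, act (act m f) g = act m (mapmul comp supp f g)) &
      (forall m, act m mapone = m)].

Definition is_rmod_morph (M N : zmodType) (actM : M -> (G -> R) -> M)
  (actN : N -> (G -> R) -> N) (h : M -> N) : Prop :=
  (forall x y, h (x + y) = h x + h y) /\ (forall m f, h (actM m f) = actN (h m) f).

(* Rat^C(M): m such that there is  sum_i m_i (x) c_i  in  M (x)_R C  with
   m.f = sum_i m_i f(c_i) for all f in *C = Map(G,R).  Every element of
   M (x)_R (R (x)_k kG) is a finite sum of simple tensors m_i (x) (s_i (x) sigma_i),
   represented by the list of triples (m_i, s_i, sigma_i); and f(s (x) sigma) = s f(sigma)
   (left R-linearity of f), acting on M through the embedding of R. *)
Definition RatC (M : zmodType) (act : M -> (G -> R) -> M) (m : M) : Prop :=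
  exists s : seq (M * R * G),
    forall f : G -> R,
      act m f = \sum_(x <- s) act x.1.1 (embR (x.1.2 * f x.2)).

End Defs.

From HB Require Import structures.
From mathcomp Require Import all_boot all_order all_algebra.
From Stdlib Require Import FunctionalExtensionality.
Import GRing.Theory.
Local Open Scope ring_scope.
Set Implicit Arguments. Unset Strict Implicit.

(* The whole argument rests on the orthogonal idempotents v_sigma of
   *C = Map(G,R).  Since 1 is homogeneous of degree 1 (unit_homogeneous), each
   v_sigma(tau) is homogeneous of degree 1, so  (v_sigma # g)(tau) =
   v_sigma(tau) g(tau): left multiplication by v_sigma just restricts g to
   sigma (mapmul_vdelta).  From this:
   - m.v_sigma is rational, with the one-term tensor m.v_sigma (x) (1 (x) sigma);
   - conversely, if m.f = sum_i m_i f(s_i (x) sigma_i) for all f, testing with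
     f = 1 and f = sum_{sigma in S} v_sigma (S the sigma_i) gives
     m = sum_{sigma in S} m.v_sigma (RatC_decomposition);
   - the sum is direct, since v_sigma' # v_sigma = delta_{sigma',sigma} v_sigma;
   - for r in R_rho, (v_sigma # r) = r v_sigma = (r v_sigma) # v_{sigma rho}.
   Exactness of Rat^C follows: a rational n = f(m0) in the image of a module
   map f equals sum n.v_sigma = f(sum m0.v_sigma), with sum m0.v_sigma rational. *)

Lemma morph_idem0 (U : Type) (V : zmodType) (op : U -> U -> U) (z : U) (h : U -> V) :
  {morph h : x y / op x y >-> x + y} -> op z z = z -> h z = 0.
Proof.
move=> hD zz; apply: (addrI (h z)).
by rewrite addr0 -hD zz.
Qed.

Lemma additive_sum (U V : zmodType) (h : U -> V) (I : Type) (s : seq I) (F : I -> U) :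
  {morph h : x y / x + y} -> h (\sum_(i <- s) F i) = \sum_(i <- s) h (F i).
Proof. by move=> hD; apply: big_morph => //; apply: morph_idem0 hD (addr0 0). Qed.

Lemma sum_pred1 (T : eqType) (V : zmodType) (s : seq T) (a : T) (F : T -> V) :
  uniq s -> \sum_(x <- s) (if x == a then F x else 0) = if a \in s then F a else 0.
Proof.
elim: s => [|b s IH] /=; first by rewrite big_nil.
case/andP=> bs us; rewrite big_cons in_cons IH // eq_sym.
case: eqP => [->|_]; last by rewrite add0r.
by rewrite (negbTE bs) addr0.
Qed.

Section Grading.
Variables (G : groupType) (k : comPzRingType) (R : algType k).
Variables (comp : G -> R -> R) (supp : R -> seq G).
Hypothesis grading : is_grading comp supp.

Lemma comp_sum rho (I : Type) (s : seq I) (F : I -> R) :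
  comp rho (\sum_(i <- s) F i) = \sum_(i <- s) comp rho (F i).
Proof. by case: grading => compD _ _ _ _; apply: additive_sum. Qed.

Lemma comp0 rho : comp rho 0 = 0.
Proof. by case: grading => compD _ _ _ _; apply: morph_idem0 (compD rho) (addr0 0). Qed.

Lemma comp_homogeneous t a :
  comp a t = t -> forall rho, comp rho t = if rho == a then t else 0.
Proof. by case: grading => _ _ compK _ _ ht rho; rewrite -ht compK ht. Qed.

(* Extracting the degree-a term of a sum over supp t: if a is not in supp t
   then t_a = 0, and the hypothesis makes F a vanish as well. *)
Lemma sum_supp_pred1 t a (F : G -> R) : (comp a t = 0 -> F a = 0) ->
  \sum_(rho <- supp t) (if rho == a then F rho else 0) = F a.
Proof.
move=> Fa0; case: grading => _ _ _ decomp _; case: (decomp t) => uniq_supp in_supp _.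
rewrite sum_pred1 //; case: ifP => // /negbT a_notin.
rewrite Fa0 //; apply/eqP; apply: contraNT a_notin; apply: in_supp.
Qed.

Lemma sum_homogeneous_mul t a (h : G -> R) : comp a t = t ->
  \sum_(rho <- supp t) comp rho t * h rho = t * h a.
Proof.
move=> ht; rewrite -(@sum_supp_pred1 t a (fun=> t * h a)); last by rewrite ht => ->; rewrite mul0r.
by apply: eq_bigr => rho _; rewrite (comp_homogeneous ht); case: eqP => [->|_]; rewrite ?mul0r.
Qed.

Lemma eqg_mulr (sg rho : G) : (sg == (sg * rho)%g) = (rho == 1%g).
Proof. by rewrite -{1}[sg]mulg1 (inj_eq (mulgI sg)) eq_sym. Qed.

(* The unit of a graded algebra is homogeneous of degree 1.  With e = 1_1,
   a homogeneous x of degree sg satisfies x = (x 1)_sg = x e, since x 1_rho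
   lies in degree sg rho; by decomposition x e = x for all x, so e = 1. *)
Lemma unit_homogeneous : comp 1%g 1 = 1.
Proof.
case: grading => _ _ compK decomp compM.
have homog_unit x sg : comp sg x = x -> x * comp 1%g 1 = x.
  move=> hx; case: (decomp 1) => _ _ dec1.
  have x_1rho rho : comp (sg * rho)%g (x * comp rho 1) = x * comp rho 1.
    by apply: compM => //; rewrite compK eqxx.
  rewrite -{2}hx -{2}[x]mulr1 {2}dec1 mulr_sumr comp_sum.
  under eq_bigr => rho _ do rewrite (comp_homogeneous (x_1rho rho)) eqg_mulr.
  by rewrite sum_supp_pred1 // => ->; rewrite mulr0.
have right_unit x : x * comp 1%g 1 = x.
  case: (decomp x) => _ _ decx; rewrite decx mulr_suml.
  by apply: eq_bigr => rho _; apply: (homog_unit _ rho); rewrite compK eqxx.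
by rewrite -[RHS]right_unit mul1r.
Qed.

(* Every value of v_sigma is 0 or 1, hence homogeneous of degree 1. *)
Lemma vdelta_homogeneous (sg tau : G) : comp 1%g (vdelta R sg tau) = vdelta R sg tau.
Proof. by rewrite /vdelta; case: eqP => _; rewrite ?unit_homogeneous ?comp0. Qed.

Lemma mapmul_homogeneous (f g : G -> R) (d : G -> G) :
  (forall tau, comp (d tau) (f tau) = f tau) ->
  mapmul comp supp f g = fun tau => f tau * g (tau * d tau)%g.
Proof.
by move=> hf; apply: functional_extensionality => tau; apply: sum_homogeneous_mul.
Qed.

Lemma mapmul_vdelta (sg : G) (g : G -> R) :
  mapmul comp supp (vdelta R sg) g = fun tau => vdelta R sg tau * g tau.
Proof.
rewrite (mapmul_homogeneous g (d := fun=> 1%g)); last exact: vdelta_homogeneous.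
by apply: functional_extensionality => tau; rewrite mulg1.
Qed.

End Grading.

Lemma vdelta_mul (G : groupType) (k : comPzRingType) (R : algType k) (sg' sg tau : G) :
  vdelta R sg' tau * vdelta R sg tau = if sg' == sg then vdelta R sg tau else 0.
Proof.
rewrite /vdelta; case: (sg' =P sg) => [->|ne]; first by case: (sg == tau); rewrite ?mulr1 ?mul0r.
case: (sg' =P tau) => [<-|_]; last by rewrite mul0r.
by case: (sg =P sg') => [e|_]; [case: ne | rewrite mulr0].
Qed.

Lemma vdelta_shift (G : groupType) (k : comPzRingType) (R : algType k) (sg rho tau : G) :
  vdelta R (sg * rho)%g (tau * rho)%g = vdelta R sg tau.
Proof. by rewrite /vdelta (inj_eq (mulIg rho)). Qed.

Section RightModule.
Variables (G : groupType) (k : comPzRingType) (R : algType k).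
Variables (comp : G -> R -> R) (supp : R -> seq G).
Hypothesis grading : is_grading comp supp.
Variables (M : zmodType) (act : M -> (G -> R) -> M).
Hypothesis rmod : is_rmodule comp supp act.

Let zero : G -> R := fun=> 0.

Lemma act_sum_l (I : Type) (s : seq I) (F : I -> M) f :
  act (\sum_(i <- s) F i) f = \sum_(i <- s) act (F i) f.
Proof. by case: rmod => _ actDl _ _; apply: (additive_sum (h := act^~ f)). Qed.

Lemma act0l f : act 0 f = 0.
Proof. by case: rmod => _ actDl _ _; exact: morph_idem0 (fun x y => actDl x y f) (addr0 0). Qed.

Lemma act_zero m : act m zero = 0.
Proof.
case: rmod => actDr _ _ _; apply: morph_idem0 (actDr m) _.
by apply: functional_extensionality => tau; rewrite /mapadd addr0.
Qed.

Lemma act_sum_r (I : Type) (s : seq I) (F : I -> G -> R) m :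
  act m (fun tau => \sum_(i <- s) F i tau) = \sum_(i <- s) act m (F i).
Proof.
case: rmod => actDr _ _ _; elim: s => [|b s IH].
  rewrite big_nil -(act_zero m); congr act.
  by apply: functional_extensionality => tau; rewrite big_nil.
rewrite big_cons -IH -actDr; congr act.
by apply: functional_extensionality => tau; rewrite big_cons.
Qed.

(* m.v_sigma is rational: m.v_sigma.f = (m.v_sigma) f(1 (x) sigma). *)
Lemma RatC_vdelta m sg : RatC act (act m (vdelta R sg)).
Proof.
case: rmod => _ _ actA _.
exists [:: (act m (vdelta R sg), 1, sg)] => f; rewrite big_seq1 /= !actA !mapmul_vdelta //.
congr act; apply: functional_extensionality => tau; rewrite /embR mul1r /vdelta.
by case: eqP => [->|_]; rewrite ?mul0r.
Qed.

Lemma RatC_sum (s : seq G) (n : G -> M) :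
  RatC act (\sum_(sg <- s) act (n sg) (vdelta R sg)).
Proof.
elim: s => [|sg s [t Ht]]; first by exists [::] => f; rewrite !big_nil act0l.
case: (RatC_vdelta (n sg) sg) => t0 Ht0; exists (t0 ++ t) => f.
by case: rmod => _ actDl _ _; rewrite big_cons actDl Ht0 Ht big_cat.
Qed.

(* A rational element is the sum of its components m.v_sigma over the finitely
   many degrees sigma occurring in a tensor witnessing its rationality. *)
Lemma RatC_decomposition m : RatC act m ->
  exists S : seq G, m = \sum_(sg <- S) act m (vdelta R sg).
Proof.
case: rmod => _ _ _ act1 [s Hs]; exists (undup (map (fun x => x.2) s)).
rewrite -act_sum_r -{1}(act1 m) !Hs; apply: eq_big_seq => x x_in.
congr act; congr embR; congr (_ * _).
rewrite /vdelta sum_pred1 ?undup_uniq // mem_undup.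
by rewrite (map_f (fun x => x.2) x_in).
Qed.

Lemma RatC_span m : RatC act m <->
  exists (s : seq G) (n : G -> M), m = \sum_(sg <- s) act (n sg) (vdelta R sg).
Proof.
split; last by case=> s [n ->]; apply: RatC_sum.
by case/RatC_decomposition => S ->; exists S, (fun=> m).
Qed.

(* Acting by v_sigma on sum_sigma' n_sigma'.v_sigma' isolates n_sigma.v_sigma. *)
Lemma direct_sum_vdelta (s : seq G) (n : G -> M) : uniq s ->
  \sum_(sg <- s) act (n sg) (vdelta R sg) = 0 ->
  forall sg, sg \in s -> act (n sg) (vdelta R sg) = 0.
Proof.
case: rmod => _ _ actA _ uniq_s sum0 sg sg_in.
have project sg' : act (act (n sg') (vdelta R sg')) (vdelta R sg)
                   = if sg' == sg then act (n sg') (vdelta R sg) else 0.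
  rewrite actA mapmul_vdelta //.
  under [fun tau => _]functional_extensionality => tau do rewrite vdelta_mul.
  by case: (sg' =P sg) => [->|_]; last exact: act_zero.
have := congr1 (act^~ (vdelta R sg)) sum0; rewrite /= act_sum_l act0l.
under eq_bigr => sg' _ do rewrite project.
by rewrite sum_pred1 // sg_in.
Qed.

Lemma vdelta_graded_shift sg rho m r : comp rho r = r ->
  act (act m (vdelta R sg)) (@embR G k R r) = act (act m (fun tau => vdelta R sg tau * r))
                                              (vdelta R (sg * rho)%g).
Proof.
case: rmod => _ _ actA _ hr; rewrite !actA mapmul_vdelta //.
rewrite (mapmul_homogeneous grading _ (d := fun=> rho)).
  congr act; apply: functional_extensionality => tau.
  by rewrite /embR vdelta_shift /vdelta; case: eqP; rewrite ?mul0r ?mulr1.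
by move=> tau; rewrite /vdelta; case: (sg =P tau) => _; rewrite ?mul1r ?mul0r ?(comp0 grading).
Qed.

End RightModule.

Section Exactness.
Variables (G : groupType) (k : comPzRingType) (R : algType k).
Variables (comp : G -> R -> R) (supp : R -> seq G).
Hypothesis grading : is_grading comp supp.
Variables (M N : zmodType) (actM : M -> (G -> R) -> M) (actN : N -> (G -> R) -> N).
Hypotheses (rmodM : is_rmodule comp supp actM) (rmodN : is_rmodule comp supp actN).

Lemma RatC_image (f : M -> N) : is_rmod_morph actM actN f ->
  forall m0 : M, RatC actN (f m0) -> exists m : M, RatC actM m /\ f m = f m0.
Proof.
move=> [fD fA] m0 /(RatC_decomposition rmodN) [S eS].
exists (\sum_(sg <- S) actM m0 (vdelta R sg)); split; first exact: (RatC_sum grading rmodM).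
by rewrite (additive_sum _ _ fD) [RHS]eS; apply: eq_bigr => sg _; rewrite fA.
Qed.

End Exactness.

Theorem mainTheorem10 (G : groupType) (k : comPzRingType) (R : algType k)
    (comp : G -> R -> R) (supp : R -> seq G) :
  is_grading comp supp ->
  (forall (M : zmodType) (act : M -> (G -> R) -> M),
    is_rmodule comp supp act ->
    [/\ (* Rat^C(M) = sum_sigma M.v_sigma *)
        (forall m : M, RatC act m <->
           exists (s : seq G) (n : G -> M), m = \sum_(sigma <- s) act (n sigma) (vdelta R sigma)),
        (* the sum is direct *)
        (forall (s : seq G) (n : G -> M), uniq s ->
           \sum_(sigma <- s) act (n sigma) (vdelta R sigma) = 0 ->
           forall sigma, sigma \in s -> act (n sigma) (vdelta R sigma) = 0) &
        (* (M.v_sigma) R_rho is contained in M.v_{sigma rho} *)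
        (forall (sigma rho : G) (m : M) (r : R), comp rho r = r ->
           exists n : M, act (act m (vdelta R sigma)) (@embR G k R r)
                         = act n (vdelta R (sigma * rho)%g))]) /\
  (* Rat^C is exact *)
  (forall (M N P : zmodType) (actM : M -> (G -> R) -> M) (actN : N -> (G -> R) -> N)
          (actP : P -> (G -> R) -> P) (f : M -> N) (g : N -> P),
     is_rmodule comp supp actM -> is_rmodule comp supp actN -> is_rmodule comp supp actP ->
     is_rmod_morph actM actN f -> is_rmod_morph actN actP g ->
     (forall n : N, g n = 0 <-> exists m : M, f m = n) ->
     forall n : N, RatC actN n -> g n = 0 -> exists m : M, RatC actM m /\ f m = n).
Proof.
move=> grading; split.
  move=> M act rmod; split.
  - by move=> m; apply: (RatC_span grading rmod).
  - exact: (direct_sum_vdelta grading rmod).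
  - by move=> sg rho m r hr; eexists; apply: (vdelta_graded_shift grading rmod).
move=> M N P actM actN actP f g rmodM rmodN _ f_morph _ ker_im n n_rat gn0.
have [m0 fm0] := proj1 (ker_im n) gn0; subst n.
exact: (RatC_image grading rmodM rmodN f_morph n_rat).
Qed.
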